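(* Let $N\ge1$, $1\le S\le N$, $L$ a band-width vector, $\dot W$ a real symmetric $N\times N$ matrix, $k\in\mathbb Z$, $\beta\in\mathbb R^S$, $\varepsilon>0$, $W_\varepsilon=\mathrm{Id}+\varepsilon\dot W$, $D_\beta=D_{k,\beta,L}$ and $P_{\varepsilon,\beta}=D_\beta W_\varepsilon$. If $f,g\in\mathbb C^N$ and $\lambda\in\mathbb C$ satisfy $P_{\varepsilon,\beta}f=\lambda f$ and $P_{\varepsilon,\beta}g=\lambda g+f$, then $\langle f,D_\beta\overline f\rangle=0$.
   Context: A band-width vector is $L=(L_1,\dots,L_S)$ of positive integers with $\sum_sL_s=N$; $N_0=0$, $N_s=N_{s-1}+L_s$, $B_s=\{j:N_{s-1}<j\le N_s\}$. $D_{k,\beta,L}$ is the $N\times N$ diagonal matrix whose $j$-th diagonal entry is $e^{-2\pi ik\beta_s}$ for $j\in B_s$. $\overline f$ denotes the entrywise complex conjugate and $\langle v,w\rangle=\sum_{j=1}^Nv_j\overline{w_j}$. *)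

From HB Require Import structures.
From mathcomp Require Import all_boot all_order all_algebra.
From mathcomp Require Import all_classical all_reals all_analysis.
From mathcomp Require Import complex.
Set Implicit Arguments. Unset Strict Implicit. Unset Printing Implicit Defensive.
Import Order.TTheory GRing.Theory Num.Theory.
Local Open Scope ring_scope.
Local Open Scope complex_scope.

(* Band-width vector: a list L of positive naturals with sum N; S = size L. *)
Definition bandwidth_vector (N : nat) (L : seq nat) : Prop :=
  all (fun l => 0 < l)%N L /\ (\sum_(l <- L) l)%N = N.

Definition psum (L : seq nat) (s : nat) : nat := (\sum_(i < s) nth 0 L i)%N.

(* 0-indexed block index of 0-indexed coordinate j: the (0-indexed) s with
   psum L s <= j < psum L s.+1, i.e. the paper's (1-indexed) block B_{s+1}
   containing the paper's (1-indexed) coordinate j+1. *)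
Definition block_of (L : seq nat) (j : nat) : nat :=
  find (fun s => j < psum L s.+1)%N (iota 0 (size L)).

Definition expmi (R : realType) (t : R) : R[i] := (cos t) +i* (- sin t).

Definition Dmat {R : realType} {N : nat} (k : int) (beta : seq R) (L : seq nat)
  : 'M[R[i]]_N :=
  \matrix_(i < N, j < N)
    (if i == j then expmi (2 * pi * k%:~R * nth 0 beta (block_of L i)) else 0).

Definition Weps {R : realType} {N : nat} (eps : R) (Wdot : 'M[R]_N) : 'M[R[i]]_N :=
  map_mx (fun x : R => x%:C) (1%:M + eps *: Wdot).

Definition cinner {R : realType} {N : nat} (v w : 'cV[R[i]]_N) : R[i] :=
  \sum_(j < N) v j 0 * (w j 0)^*.

From HB Require Import structures.
From mathcomp Require Import all_boot all_order all_algebra.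
From mathcomp Require Import all_classical all_reals all_analysis.
From mathcomp Require Import complex.
From mathcomp Require Import ring.
Set Implicit Arguments.
Unset Strict Implicit.
Unset Printing Implicit Defensive.

Import Order.TTheory GRing.Theory Num.Theory.
Local Open Scope ring_scope.

(** Write [P = D W] with [D] diagonal of unit modulus and [W] symmetric. For
    the symmetric bilinear form [b(x, y) = x^T conj(D) y] the operator [P] is
    self-adjoint, because [conj(D) P = W]. Along the Jordan chain
    [(P - lambda) f = 0], [(P - lambda) g = f] this gives
    [b(f, f) = b(f, (P - lambda) g) = b((P - lambda) f, g) = 0],
    and [<f, D conj(f)>] is exactly [b(f, f)]. *)

Lemma jordan_chain_isotropic (R : comPzRingType) (n : nat) (E P : 'M[R]_n)
    (f g : 'cV[R]_n) (lambda : R) :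
  E^T = E -> (E *m P)^T = E *m P ->
  P *m f = lambda *: f -> P *m g = lambda *: g + f ->
  f^T *m E *m f = 0.
Proof.
move=> symE symEP Pf Pg.
have fEP : f^T *m E *m P = lambda *: (f^T *m E).
  by rewrite -mulmxA -symEP -trmx_mul -mulmxA Pf -scalemxAr [LHS]linearZ /=
    trmx_mul symE.
have -> : f^T *m E *m f = f^T *m E *m (P *m g - lambda *: g).
  by rewrite Pg addrAC subrr add0r.
by rewrite mulmxBr mulmxA fEP -scalemxAl -scalemxAr subrr.
Qed.

Lemma mul_diag_conj_unimodular (C : numClosedFieldType) (n : nat)
    (d : 'rV[C]_n) :
  (forall i, `|d 0 i| = 1) -> diag_mx (map_mx Num.conj d) *m diag_mx d = 1%:M.
Proof.
move=> d1; rewrite mulmx_diag -diag_const_mx; congr diag_mx; apply/rowP => i.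
by rewrite !mxE -normCKC d1 expr1n.
Qed.

Local Open Scope complex_scope.

Lemma norm_expmi (R : realType) (t : R) : `|expmi t| = 1.
Proof.
apply/eqP; rewrite -sqrp_eq1 // normCK; apply/eqP.
rewrite /expmi /=; congr (_ +i* _); last by ring.
by rewrite -(cos2Dsin2 t); ring.
Qed.

Lemma Dmat_diag (R : realType) (N : nat) (k : int) (beta : seq R)
    (L : seq nat) :
  Dmat k beta L =
  diag_mx (\row_(j < N) expmi (2 * pi * k%:~R * nth 0 beta (block_of L j))).
Proof.
by apply/matrixP => i j; rewrite !mxE; case: eqP => [->|_]; rewrite ?mulr1n.
Qed.

Lemma Weps_sym (R : realType) (N : nat) (eps : R) (Wdot : 'M[R]_N) :
  Wdot^T = Wdot -> (Weps eps Wdot)^T = Weps eps Wdot.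
Proof.
by move=> symW; rewrite /Weps map_trmx linearD linearZ /= tr_scalar_mx symW.
Qed.

Lemma cinner_diag_conj (R : realType) (N : nat) (d : 'rV[R[i]]_N)
    (f : 'cV[R[i]]_N) :
  cinner f (diag_mx d *m map_mx (fun z => z^*) f) =
  (f^T *m diag_mx (map_mx Num.conj d) *m f) 0 0.
Proof.
rewrite /cinner mul_mx_diag [RHS]mxE; apply: eq_bigr => j _.
by rewrite mul_diag_mx !mxE rmorphM /= conjCK mulrA.
Qed.

Theorem lemma3p5 (R : realType) (N : nat) (L : seq nat) (Wdot : 'M[R]_N)
  (k : int) (beta : seq R) (eps : R) (f g : 'cV[R[i]]_N) (lambda : R[i]) :
  (1 <= N)%N -> (1 <= size L <= N)%N -> bandwidth_vector N L ->
  Wdot^T = Wdot -> size beta = size L -> 0 < eps ->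
  (Dmat k beta L *m Weps eps Wdot) *m f = lambda *: f ->
  (Dmat k beta L *m Weps eps Wdot) *m g = lambda *: g + f ->
  cinner f (Dmat k beta L *m map_mx (fun z => z^*) f) = 0.
Proof.
(* Only the symmetry of [Wdot] matters: no assumption on the sizes, on the
   band widths, on [beta] or on [eps] is used. *)
move=> _ _ _ symW _ _; rewrite Dmat_diag cinner_diag_conj.
set d := \row_j _ => Pf Pg.
have d1 i : `|d 0 i| = 1 by rewrite mxE norm_expmi.
have symEP : (diag_mx (map_mx Num.conj d) *m (diag_mx d *m Weps eps Wdot))^T =
             diag_mx (map_mx Num.conj d) *m (diag_mx d *m Weps eps Wdot).
  by rewrite mulmxA mul_diag_conj_unimodular // mul1mx Weps_sym.
have := jordan_chain_isotropic (tr_diag_mx (map_mx Num.conj d)) symEP Pf Pg.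
by move=> /matrixP /(_ 0 0) ->; rewrite mxE.
Qed.
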